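(* Let $\mathcal Q_{bin}$ be the collection of all probability measures $\mu$ on $\{0,1\}^{\mathbb N}$ with $\mathrm{Mean}(\mu)\in\{0,1\}^{\mathbb N}$. Then $\mathcal Q_{bin}$ is non-separable in its means, and $\mathcal Q_{bin}$ is UME-learnable.
   Context: $\{0,1\}^{\mathbb N}$ carries the product $\sigma$-algebra. For a probability measure $\mu$ on $\{0,1\}^{\mathbb N}$, $\mathrm{Mean}(\mu)\in[0,1]^{\mathbb N}$ is the vector whose $j$-th coordinate is $\mathbb E[X_j]$ for $X\sim\mu$; $\mathrm{Mean}(\mathcal Q)=\{\mathrm{Mean}(\mu):\mu\in\mathcal Q\}$. A countable $\varepsilon$-cover of $\mathrm{Mean}(\mathcal Q)$ is a countable set $C\subset[0,1]^{\mathbb N}$ such that every $q\in\mathrm{Mean}(\mathcal Q)$ has some $p\in C$ with $\|q-p\|_\infty<\varepsilon$. $\mathcal Q$ is separable in its means if for every $\varepsilon>0$ a countable $\varepsilon$-cover exists, and non-separable in its means otherwise. $\mathcal Q$ is UME-learnable if there exist (measurable) estimators $\mathcal A_n:(\{0,1\}^{\mathbb N})^n\to[0,1]^{\mathbb N}$ such that for every $\mu\in\mathcal Q$, $\mathbb E_{S\sim\mu^n}\|\mathcal A_n(S)-\mathrm{Mean}(\mu)\|_\infty\to0$ as $n\to\infty$, where $S$ consists of $n$ i.i.d. draws from $\mu$. *)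

From HB Require Import structures.
From mathcomp Require Import all_boot all_order all_algebra.
From mathcomp Require Import all_classical all_reals all_analysis.
Unset Printing Implicit Defensive.
Import Order.TTheory GRing.Theory Num.Theory.
Local Open Scope classical_set_scope.
Local Open Scope ring_scope.

(* Generators of the product sigma-algebra on {0,1}^N: coordinate cylinders. *)
Definition cube_cyl : set (set (nat -> bool)) :=
  fun A => exists (j : nat) (b : bool), A = [set x | x j = b].

Definition Cube := g_sigma_algebraType cube_cyl.

(* Generators of the product sigma-algebra on ({0,1}^N)^n. *)
Definition sample_cyl (n : nat) : set (set ('I_n -> nat -> bool)) :=
  fun A => exists (i : 'I_n) (j : nat) (b : bool), A = [set S | S i j = b].

Definition Sample (n : nat) := g_sigma_algebraType (sample_cyl n).

Definition scons n (x : nat -> bool) (s : 'I_n -> nat -> bool) :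
  'I_n.+1 -> nat -> bool :=
  fun i => if unlift ord0 i is Some k then s k else x.

(* E_{S ~ mu^n}[f S], for nonnegative f, written as the iterated
   (Tonelli) integral over the n i.i.d. coordinates of the sample. *)
Fixpoint iid_expect {R : realType} (mu : probability Cube R) (n : nat) :
  (('I_n -> nat -> bool) -> \bar R) -> \bar R :=
  match n with
  | 0 => fun f => f (fun _ _ => false)
  | m.+1 => fun (f : (('I_m.+1 -> nat -> bool) -> \bar R)) => (\int[mu]_x iid_expect mu m (fun s => f (@scons m x s)))%E
  end.

Definition Mean {R : realType} (mu : probability Cube R) : nat -> R :=
  fun j => fine (\int[mu]_x ((x j)%:R)%:E)%E.

Definition MeanSet {R : realType} (Q : set (probability Cube R)) : set (nat -> R) :=
  [set Mean mu | mu in Q].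

Definition supnorm {R : realType} (v : nat -> R) : \bar R :=
  ereal_sup (range (fun j => (`|v j|)%:E)).

Definition separable_in_means {R : realType} (Q : set (probability Cube R)) : Prop :=
  forall eps : R, 0 < eps ->
    exists C : set (nat -> R),
      countable C /\ (forall p, C p -> forall j, 0 <= p j <= 1) /\
      (forall q, MeanSet Q q -> exists p, C p /\ (supnorm (fun j => (q j - p j)%R) < eps%:E)%E).

Definition UME_learnable {R : realType} (Q : set (probability Cube R)) : Prop :=
  exists A : forall n : nat, Sample n -> (nat -> R),
    (forall n j, measurable_fun setT (fun S : Sample n => A n S j)) /\
    (forall n S j, 0 <= A n S j <= 1) /\
    (forall mu, Q mu ->
       (fun n => iid_expect mu n (fun S => supnorm (fun j => (A n S j - Mean mu j)%R))) @ \oo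
         --> 0%E).

Definition Qbin (R : realType) : set (probability Cube R) :=
  [set mu | forall j, Mean mu j = 0 \/ Mean mu j = 1].

From HB Require Import structures.
From mathcomp Require Import all_boot all_order all_algebra.
From mathcomp Require Import all_classical all_reals all_analysis.
From mathcomp Require Import measurable_realfun.
Import Order.TTheory GRing.Theory Num.Theory.
Local Open Scope classical_set_scope.
Local Open Scope ring_scope.

(* Each 0/1 vector b is the mean of the point mass at b, so the means of Q_bin
   fill {0,1}^N, whose points lie at sup-distance 1 from each other; a
   countable 1/2-cover would then inject {0,1}^N into N, which Cantor's
   diagonal argument forbids.  Conversely, if every coordinate mean is 0 or 1,
   each coordinate almost surely equals its mean, so (by countable
   subadditivity) the measure is the point mass at its mean vector, and the
   estimator returning the first sample point is exact almost surely. *)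

Lemma Cantor_no_injection (T : Type) (h : (T -> bool) -> T) : ~ injective h.
Proof.
move=> h_inj; pose d t := ~~ `[< exists b, h b = t /\ b t >].
suff : d (h d) = ~~ d (h d) by case: (d (h d)).
rewrite {1}/d; congr (~~ _); apply/asboolP; case dhd: (d (h d)); first by exists d.
by move=> [b [/h_inj ->]]; rewrite dhd.
Qed.

Lemma natr_bool_indic {T : Type} {R : realType} (P : T -> bool) (x : T) :
  (P x)%:R = \1_[set y | P y] x :> R.
Proof.
by rewrite /indic; case Px: (P x); [rewrite mem_set | rewrite memNset //= Px].
Qed.

Lemma measurable_natr_bool {d} {T : measurableType d} {R : realType} (P : T -> bool) :
  measurable [set x | P x] -> measurable_fun setT (fun x => (P x)%:R : R).
Proof.
move=> mP; rewrite (_ : (fun x => _) = \1_[set x | P x]); first exact: measurable_indic.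
by apply/funext => x; rewrite natr_bool_indic.
Qed.

Lemma supnorm_ge {R : realType} (v : nat -> R) j : ((`|v j|)%:E <= supnorm v)%E.
Proof. by apply: ereal_sup_ubound; exists j. Qed.

Lemma natr_bool_eq_of_dist (R : numFieldType) (a b : bool) (p : R) :
  `|a%:R - p| < 1 / 2 -> `|b%:R - p| < 1 / 2 -> a = b.
Proof.
move=> ap bp; have lt1 : `|a%:R - b%:R| < 1 :> R.
  apply: le_lt_trans (ler_distD p _ _) _.
  by rewrite (distrC p) [X in _ < X](splitr 1) ltrD.
by move: lt1 {ap bp}; case: a; case: b; rewrite ?subrr ?subr0 ?sub0r ?normrN ?normr1 ?ltxx.
Qed.

Lemma supnorm_sub_bool (R : realType) (x y : nat -> bool) :
  supnorm (fun j => (x j)%:R - (y j)%:R :> R) = (\1_(~` [set y]) x)%:E.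
Proof.
have coordE j : `|(x j)%:R - (y j)%:R| = (x j != y j)%:R :> R.
  by case: (x j); case: (y j); rewrite ?subrr ?subr0 ?sub0r ?normr0 ?normrN ?normr1.
have [xy | xy] := pselect (x = y).
  rewrite /indic memNset; last by move/(_ xy).
  apply/le_anti/andP; split.
    by apply: ge_ereal_sup => _ [j _ <-]; rewrite coordE xy eqxx.
  by have := supnorm_ge (fun j => (x j)%:R - (y j)%:R : R) 0%N; rewrite coordE xy eqxx.
have [j xyj] : exists j, x j != y j.
  by apply/not_existsP => same; apply/xy/funext => j; apply/eqP/negPn/negP/same.
rewrite /indic mem_set //; apply/le_anti/andP; split.
  by apply: ge_ereal_sup => _ [k _ <-]; rewrite coordE lee_fin; case: (x k != y k).
by have := supnorm_ge (fun j => (x j)%:R - (y j)%:R : R) j; rewrite coordE xyj.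
Qed.

Lemma measurable_cube_cyl j b : measurable ([set x | x j = b] : set Cube).
Proof. by apply: sub_sigma_algebra; exists j, b. Qed.

Lemma Mean_cyl (R : realType) (mu : probability Cube R) j :
  Mean mu j = fine (mu [set x | x j = true]).
Proof.
rewrite /Mean (@eq_integral _ _ _ mu setT (fun x => (\1_[set x | x j] x)%:E)); last first.
  by move=> x _; rewrite (natr_bool_indic (fun y : Cube => y j)).
by rewrite integral_indic ?setIT //; exact: measurable_cube_cyl.
Qed.

Lemma Mean_dirac (R : realType) (b : nat -> bool) j :
  Mean (@dirac _ Cube b R : probability Cube R) j = (b j)%:R.
Proof. by rewrite Mean_cyl /= (natr_bool_indic (fun y : Cube => y j)). Qed.

Lemma bool_vector_in_MeanSet_Qbin (R : realType) (b : nat -> bool) :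
  MeanSet (Qbin R) (fun j => (b j)%:R).
Proof.
exists (@dirac _ Cube b R : probability Cube R).
  by move=> j; rewrite Mean_dirac; case: (b j); [right | left].
by apply/funext => j; rewrite Mean_dirac.
Qed.

Lemma eq_of_supnorm_lt_half (R : realType) (b b' : nat -> bool) (p : nat -> R) :
  (supnorm (fun j => ((b j)%:R - p j)%R) < (1 / 2)%:E)%E ->
  (supnorm (fun j => ((b' j)%:R - p j)%R) < (1 / 2)%:E)%E -> b = b'.
Proof.
move=> bp b'p; apply/funext => j; apply: (@natr_bool_eq_of_dist _ _ _ (p j)).
- by rewrite -lte_fin; exact: le_lt_trans (supnorm_ge _ j) bp.
- by rewrite -lte_fin; exact: le_lt_trans (supnorm_ge _ j) b'p.
Qed.

Lemma Qbin_not_separable (R : realType) : ~ separable_in_means (Qbin R).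
Proof.
move=> /(_ (1 / 2)) [|C [C_countable [_ C_cover]]]; first by rewrite divr_gt0.
have /choice [g gP] : forall b : nat -> bool, exists p, C p /\
    (supnorm (fun j => ((b j)%:R - p j)%R) < (1 / 2)%:E)%E.
  by move=> b; apply: C_cover; exact: bool_vector_in_MeanSet_Qbin.
have /countable_injP [f f_inj] := C_countable.
apply: (@Cantor_no_injection nat (fun b => f (g b))) => b b' /f_inj gbb'.
apply: eq_of_supnorm_lt_half (gP b).2 _.
by rewrite gbb' ?inE; [exact: (gP b').2 | exact: (gP b).1 | exact: (gP b').1].
Qed.

Lemma iid_expect_cst {R : realType} (mu : probability Cube R) n (r : \bar R) :
  iid_expect mu n (fun _ => r) = r.
Proof.
elim: n => [//|n IHn] /=; rewrite IHn integral_cst //.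
by rewrite [X in (_ * X)%E](_ : _ = 1%E) ?mule1 //; exact: probability_setT.
Qed.

Lemma iid_expect_first {R : realType} (mu : probability Cube R) n
    (f : (nat -> bool) -> \bar R) :
  iid_expect mu n.+1 (fun S => f (S ord0)) = (\int[mu]_x f x)%E.
Proof.
apply: eq_integral => x _; rewrite -[RHS](iid_expect_cst mu n).
by congr iid_expect; apply/funext => s; rewrite /scons unlift_none.
Qed.

Lemma setC1_bool_vector (y : nat -> bool) :
  ~` [set y] = \bigcup_j [set x | x j = ~~ y j].
Proof.
apply/seteqP; split => [x /= xy | x [j _ /= xj] xy]; last first.
  by move: xj; rewrite xy; case: (y j).
have [j xyj] : exists j, x j != y j.
  by apply/not_existsP => same; apply/xy/funext => j; apply/eqP/negPn/negP/same.
by exists j => //=; move: xyj; case: (x j); case: (y j).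
Qed.

Lemma measurable_cube_setC1 (y : nat -> bool) : measurable (~` [set y] : set Cube).
Proof.
by rewrite setC1_bool_vector; apply: bigcupT_measurable => j; exact: measurable_cube_cyl.
Qed.

Lemma cyl_null_of_Mean (R : realType) (mu : probability Cube R) j (b : bool) :
  Mean mu j = b%:R -> mu [set x | x j = ~~ b] = 0%E.
Proof.
rewrite Mean_cyl => Mj.
have mu_j : mu [set x | x j = true] = (b%:R)%:E.
  by rewrite -Mj fineK // fin_num_measure //; exact: measurable_cube_cyl.
case: b {Mj} mu_j => //= mu_j.
rewrite (_ : [set x | x j = false] = ~` [set x | x j = true]); last first.
  by apply/seteqP; split => x /=; case: (x j).
by rewrite (probability_setC mu (measurable_cube_cyl j true)) mu_j subee.
Qed.

Section Qbin_point_mass.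
Variables (R : realType) (mu : probability Cube R).
Hypothesis mu_Qbin : Qbin R mu.

Let m j := Mean mu j == 1.

Lemma Mean_Qbin : Mean mu = fun j => (m j)%:R.
Proof.
apply/funext => j; rewrite /m.
by case: (mu_Qbin j) => ->; rewrite ?eqxx // eq_sym oner_eq0.
Qed.

Lemma Qbin_null_off_Mean : mu (~` [set m]) = 0%E.
Proof.
apply/(negligibleP _ (measurable_cube_setC1 m)); rewrite setC1_bool_vector.
apply: negligible_bigcup => j; apply/negligibleP; first exact: measurable_cube_cyl.
by apply: cyl_null_of_Mean; rewrite Mean_Qbin.
Qed.

Lemma first_sample_error_Qbin :
  (\int[mu]_x supnorm (fun j => ((x j)%:R - Mean mu j)%R))%E = 0%E.
Proof.
rewrite Mean_Qbin; under eq_integral do rewrite supnorm_sub_bool.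
rewrite integral_indic ?setIT //; last exact: measurable_cube_setC1.
exact: Qbin_null_off_Mean.
Qed.

End Qbin_point_mass.

Definition first_sample (R : realType) : forall n, Sample n -> nat -> R :=
  fun n => if n is _.+1 then fun S j => (S ord0 j)%:R else fun _ _ => 0.

Lemma Qbin_UME_learnable (R : realType) : UME_learnable (Qbin R).
Proof.
exists (@first_sample R); split; [|split].
- move=> [|n] j /=; first exact: measurable_cst.
  apply: (measurable_natr_bool (fun S : Sample n.+1 => S ord0 j)).
  by apply: sub_sigma_algebra; exists ord0, j, true.
- by move=> [|n] S j /=; [rewrite lexx ler01 | case: (S ord0 j); rewrite /= ?lexx ?ler01].
- move=> mu mu_Qbin; apply: cvg_near_cst; exists 1%N => // [[|n]] // _.
  pose err x := supnorm (fun j => ((x j)%:R - Mean mu j)%R).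
  by rewrite (iid_expect_first mu n err) first_sample_error_Qbin.
Qed.

Theorem mainTheorem5 (R : realType) :
  ~ separable_in_means (Qbin R) /\ UME_learnable (Qbin R).
Proof. by split; [exact: Qbin_not_separable | exact: Qbin_UME_learnable]. Qed.
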